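(* There is a constant $C>0$ such that for all $d\ge1$, $$\pi_d(p_1p_2\cdots p_{d+1})=O(C^d).$$
   Context: $p_i$ denotes the $i$-th prime. For a real $x$, $\pi_d(x)$ is the number of squarefree positive integers $m\le x$ having exactly $d$ prime factors. *)

From mathcomp Require Import all_boot.
Set Implicit Arguments. Unset Strict Implicit. Unset Printing Implicit Defensive.

Definition next_prime (m : nat) : nat :=
  ex_minn (let: exist2 p Hmp Hp := prime_above m in
           ex_intro (fun q => (m < q) && prime q) p (introT andP (conj Hmp Hp))).

(* p_i, the i-th prime (1-indexed): p_1 = 2, p_2 = 3, ... *)
Definition nth_prime (i : nat) : nat := iter i next_prime 1.

Definition primorial (k : nat) : nat := \prod_(1 <= i < k.+1) nth_prime i.

Definition squarefree (m : nat) : bool :=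
  (0 < m) && all (fun p => ~~ (p ^ 2 %| m)) (primes m).

Definition pi_d (d x : nat) : nat :=
  count (fun m => squarefree m && (size (primes m) == d)) (iota 1 x).

From mathcomp Require Import all_boot zify.
Set Implicit Arguments. Unset Strict Implicit. Unset Printing Implicit Defensive.

(* Write [p := p_(d+1)] and split a squarefree [m <= p_1 ... p_(d+1)] with [d]
   prime factors into its factors up to [p] and the [k] factors beyond [p].
   Comparing [m] with the primorial, the large factors have product at most
   [p ^ k.+1]; as they are distinct and exceed [p], this forces [k < 2q] for any
   [q] with [p ^ q.+1 < (p + q) ^ q].  So [m] is encoded by a set of small primes
   and a number at most [p ^ q.*2].  Chebyshev's bound [p = O(d log d)] admits
   such a [q = O(sqrt d * log d)], and then [p ^ q.*2 < 2 ^ d] for large [d],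
   whence [pi_d <= 2 * 4 ^ d]. *)

Lemma next_primeP m :
  [/\ m < next_prime m, prime (next_prime m)
    & forall q, m < q -> prime q -> next_prime m <= q].
Proof.
rewrite /next_prime; case: ex_minnP => p /andP[mp pp] minp.
by split=> // q mq pq; apply: minp; rewrite mq pq.
Qed.

Lemma nth_primeS i : nth_prime i.+1 = next_prime (nth_prime i).
Proof. exact: iterS. Qed.

Lemma nth_prime_prime i : 0 < i -> prime (nth_prime i).
Proof. by case: i => // i _; rewrite nth_primeS; case: (next_primeP (nth_prime i)). Qed.

Lemma nth_prime_gt0 i : 0 < nth_prime i.
Proof. by case: i => [|i] //; apply/prime_gt0/nth_prime_prime. Qed.

Lemma nth_prime_ltn : {homo nth_prime : i j / i < j}.
Proof.
apply: homo_ltn => [y x z|i]; first exact: ltn_trans.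
by rewrite nth_primeS; case: (next_primeP (nth_prime i)).
Qed.

Lemma nth_prime_inj : injective nth_prime.
Proof.
move=> i j eq_ij.
by case: (ltngtP i j) => // /nth_prime_ltn; rewrite eq_ij ltnn.
Qed.

Lemma prime_ltn_nth_primeS x k :
  prime x -> (x < nth_prime k.+1) = (x <= nth_prime k).
Proof.
move=> px; apply/idP/idP => [|le_x].
  rewrite nth_primeS; case: (next_primeP (nth_prime k)) => _ _ minp.
  by apply: contraLR; rewrite -!ltnNge => /minp; apply.
exact: leq_ltn_trans le_x (nth_prime_ltn (ltnSn k)).
Qed.

Definition first_primes k := [seq nth_prime i | i <- iota 1 k].

Lemma mem_first_primes k x :
  (x \in first_primes k) = prime x && (x <= nth_prime k).
Proof.
elim: k => [|k IHk]; first by case: x => [|[|x]] /=; rewrite ?andbF.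
have -> : first_primes k.+1 = first_primes k ++ [:: nth_prime k.+1].
  by rewrite /first_primes -[k.+1]addn1 iotaD map_cat add1n addn1.
rewrite mem_cat IHk mem_seq1.
have [->|ne] := eqVneq x (nth_prime k.+1); first by rewrite orbT nth_prime_prime // leqnn.
rewrite orbF; case: (boolP (prime x)) => //= px.
by rewrite -prime_ltn_nth_primeS // ltn_neqAle ne.
Qed.

Lemma first_primes_uniq k : uniq (first_primes k).
Proof. by rewrite map_inj_uniq ?iota_uniq //; apply: nth_prime_inj. Qed.

Lemma size_first_primes k : size (first_primes k) = k.
Proof. by rewrite size_map size_iota. Qed.

Lemma primorialE k : primorial k = \prod_(x <- first_primes k) x.
Proof. by rewrite /primorial big_map /index_iota subn1. Qed.

Lemma prod_leq_exp (s : seq nat) (F : nat -> nat) c :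
  {in s, forall x, F x <= c} -> \prod_(x <- s) F x <= c ^ size s.
Proof.
elim: s => [|a s IHs] le_Fc; first by rewrite big_nil.
rewrite big_cons expnS leq_mul ?le_Fc ?mem_head ?IHs // => x s_x.
by rewrite le_Fc // in_cons s_x orbT.
Qed.

Lemma exp_leq_prod (s : seq nat) (F : nat -> nat) c :
  {in s, forall x, c <= F x} -> c ^ size s <= \prod_(x <- s) F x.
Proof.
elim: s => [|a s IHs] le_cF; first by rewrite big_nil.
rewrite big_cons expnS leq_mul ?le_cF ?mem_head ?IHs // => x s_x.
by rewrite le_cF // in_cons s_x orbT.
Qed.

Lemma bin_double_eq n : 'C(n.*2, n) * (n`! * n`!) = (n.*2)`!.
Proof. by have := bin_fact (leq_addl n n); rewrite addnK addnn. Qed.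

Lemma exp2_leq_bin_double n : 2 ^ n <= 'C(n.*2, n).
Proof.
have fact_pos : 0 < n`! * n`! by rewrite muln_gt0 fact_gt0.
rewrite -(leq_pmul2r fact_pos) bin_double_eq.
elim: n {fact_pos} => // n IHn.
rewrite doubleS !factS expnS.
set F := n`!; set P := 2 ^ n.
rewrite (_ : 2 * P * (n.+1 * F * (n.+1 * F)) = 2 * n.+1 * n.+1 * (P * (F * F))); last lia.
by rewrite [in X in _ <= X]mulnA leq_mul //; lia.
Qed.

Lemma sum_indicator_leq m T : \sum_(1 <= k < m.+1) (k <= T) = minn m T.
Proof.
elim: m => [|m IHm]; first by rewrite big_geq // min0n.
by rewrite big_nat_recr //= IHm; case: (leqP m.+1 T); lia.
Qed.

(* By Legendre, the valuation is [\sum_k (n.*2 %/ q ^ k - 2 * (n %/ q ^ k))], a sum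
   of terms at most [1] that vanish once [q ^ k > n.*2]. *)
Lemma logn_bin_double q n : prime q -> logn q 'C(n.*2, n) <= trunc_log q n.*2.
Proof.
move=> pq; set T := trunc_log q n.*2; have q_gt1 := prime_gt1 pq.
have logn_fact_double : logn q n`! = \sum_(1 <= k < n.*2.+1) n %/ q ^ k.
  rewrite logn_fact // [RHS](big_cat_nat _ (n := n.+1)) //=; last lia.
  rewrite [X in _ = _ + X]big1_seq ?addn0 // => k /andP[_].
  rewrite mem_index_iota => /andP[n_lt_k _]; rewrite divn_small //.
  exact: leq_trans n_lt_k (ltnW (ltn_expl k q_gt1)).
have termwise : \sum_(1 <= k < n.*2.+1) n.*2 %/ q ^ k <=
                \sum_(1 <= k < n.*2.+1) ((n %/ q ^ k + n %/ q ^ k) + (k <= T)).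
  apply: leq_sum => k _; have qk_gt0 : 0 < q ^ k by rewrite expn_gt0 ltnW.
  have [le_qk|lt_qk] := leqP (q ^ k) n.*2; last by rewrite divn_small.
  rewrite trunc_log_max // -ltnS ltn_divLR //; have := ltn_ceil n qk_gt0; lia.
rewrite big_split /= big_split /= sum_indicator_leq -logn_fact_double in termwise.
move: termwise; rewrite -logn_fact // -bin_double_eq !lognM ?muln_gt0 ?fact_gt0 //.
  lia.
by rewrite bin_gt0 -addnn leq_addl.
Qed.

Lemma pfactor_bin_double_leq q n :
  0 < n -> prime q -> q ^ logn q 'C(n.*2, n) <= n.*2.
Proof.
move=> n_gt0 pq; have q_gt1 := prime_gt1 pq.
apply: leq_trans (trunc_logP q_gt1 _); last by rewrite double_gt0.
by rewrite leq_pexp2l ?prime_gt0 ?logn_bin_double.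
Qed.

Lemma prime_bin_double_leq q n :
  0 < n -> q \in primes 'C(n.*2, n) -> q <= n.*2.
Proof.
move=> n_gt0 q_C; have pq : prime q by move: q_C; rewrite mem_primes => /andP[].
apply: leq_trans (pfactor_bin_double_leq n_gt0 pq).
rewrite -{1}[q]expn1; apply: leq_pexp2l; [exact: prime_gt0 | by rewrite logn_gt0].
Qed.

Lemma bin_double_leq n : 0 < n -> 'C(n.*2, n) <= n.*2 ^ size (primes 'C(n.*2, n)).
Proof.
move=> n_gt0; have C_gt0 : 0 < 'C(n.*2, n) by rewrite bin_gt0 -addnn leq_addl.
rewrite {1}(prod_prime_decomp C_gt0) prime_decompE big_map /=.
apply: prod_leq_exp => q; rewrite mem_primes => /andP[pq _].
exact: pfactor_bin_double_leq.
Qed.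

(* Chebyshev: [2 ^ n <= 'C(n.*2, n)] is a product of [pi(2n)] prime powers,
   each at most [n.*2]. *)
Lemma nth_prime_leq_double n k :
  0 < n -> n.*2 ^ k < 2 ^ n -> nth_prime k.+1 <= n.*2.
Proof.
move=> n_gt0 small_k; rewrite leqNgt; apply/negP => n2_lt_p.
have size_primes : size (primes 'C(n.*2, n)) <= k.
  rewrite -[k]size_first_primes uniq_leq_size ?primes_uniq // => q q_C.
  have pq : prime q by move: q_C; rewrite mem_primes => /andP[].
  rewrite mem_first_primes pq -prime_ltn_nth_primeS //.
  exact: leq_ltn_trans (prime_bin_double_leq n_gt0 q_C) n2_lt_p.
have : 2 ^ n <= n.*2 ^ k.
  apply: leq_trans (exp2_leq_bin_double n) (leq_trans (bin_double_leq n_gt0) _).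
  by rewrite leq_pexp2l ?double_gt0.
by rewrite leqNgt small_k.
Qed.

Lemma nth_prime_leq_log d : 0 < d -> nth_prime d.+1 <= 16 * d * (trunc_log 4 d).+1.
Proof.
move=> d_gt0; set H := (trunc_log 4 d).+1; set X := 2 ^ H.
have d_lt : d < X * X by rewrite -expnMn; apply: trunc_log_ltn.
have H_lt : H < X := ltn_expl H (isT : 1 < 2).
rewrite (_ : 16 * d * H = (8 * d * H).*2); last lia.
apply: nth_prime_leq_double; first by rewrite !muln_gt0 d_gt0.
rewrite (_ : 8 * d * H = H * 8 * d); last lia.
rewrite expnM expnM ltn_exp2r // -/X.
have X_ge2 : 2 <= X by apply: leq_trans H_lt.
have dH_lt : d * H < X * X * X by rewrite ltn_mul.
have X5_ge : 16 <= X * X * X * X * X by nia.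
have -> : X ^ 8 = X * X * X * X * X * (X * X * X) by rewrite !expnS expn0 muln1 !mulnA.
apply: leq_trans (leq_mul X5_ge dH_lt); lia.
Qed.

Fixpoint subseqs (T : Type) (s : seq T) : seq (seq T) :=
  if s is x :: s' then [seq x :: t | t <- subseqs s'] ++ subseqs s' else [:: [::]].

Lemma size_subseqs (T : Type) (s : seq T) : size (subseqs s) = 2 ^ size s.
Proof. by elim: s => //= x s IHs; rewrite size_cat size_map IHs expnS mul2n addnn. Qed.

Lemma mem_subseqs (T : eqType) (s t : seq T) : subseq t s -> t \in subseqs s.
Proof.
elim: s t => [|x s IHs] [|y t] //=.
- by move=> _; rewrite mem_cat IHs ?sub0seq ?orbT.
- case: eqP => [->|_] sub_ts; rewrite mem_cat; first by rewrite (map_f (cons x)) // IHs.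
  by rewrite IHs ?orbT.
Qed.

Lemma squarefree_prodE m : squarefree m -> m = \prod_(x <- primes m) x.
Proof.
case/andP => m_gt0 /allP sqf; rewrite {1}(prod_prime_decomp m_gt0) prime_decompE big_map.
apply: eq_big_seq => x m_x; have px : prime x by move: m_x; rewrite mem_primes => /andP[].
have := sqf x m_x; rewrite pfactor_dvdn // -ltnNge ltnS.
have : 0 < logn x m by rewrite logn_gt0.
by case: (logn x m) => [|[|]].
Qed.

Lemma leq_expn2r m n e : m <= n -> m ^ e <= n ^ e.
Proof. by move=> le_mn; elim: e => // e IHe; rewrite !expnS leq_mul. Qed.

Lemma expnS_ltn_expDn p q g :
  0 < p -> p ^ q.+1 < (p + q) ^ q -> q <= g -> p ^ g.+1 < (p + q) ^ g.
Proof.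
move=> p_gt0 base /subnK <-; rewrite -addnS !expnD.
apply: leq_ltn_trans (_ : _ <= (p + q) ^ (g - q) * p ^ q.+1) _.
  by rewrite leq_mul2r leq_expn2r ?leq_addr ?orbT.
by rewrite ltn_pmul2l // expn_gt0 addn_gt0 p_gt0.
Qed.

(* At most [q] of the factors lie in [(p, p + q]]; if [2q] or more factors
   exceed [p], at least [q] of them exceed [p + q], which makes the product
   too large. *)
Lemma size_ltn_of_prod_leq p q (s : seq nat) :
  0 < p -> p ^ q.+1 < (p + q) ^ q -> uniq s -> {in s, forall x, p < x} ->
  \prod_(x <- s) x <= p ^ (size s).+1 -> size s < q.*2.
Proof.
move=> p_gt0 pq_base uniq_s gt_p prod_le; rewrite ltnNge; apply/negP => large_s.
pose near := [seq x <- s | x <= p + q]; pose far := [seq x <- s | ~~ (x <= p + q)].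
have size_s : size near + size far = size s by rewrite !size_filter count_predC.
have size_near : size near <= q.
  rewrite -[q](size_iota p.+1) uniq_leq_size ?filter_uniq // => x.
  by rewrite mem_filter mem_iota => /andP[le_x /gt_p ->]; rewrite addSn ltnS.
have prod_ge : p ^ size near * (p + q) ^ size far <= \prod_(x <- s) x.
  have -> : \prod_(x <- s) x = \prod_(x <- near) x * \prod_(x <- far) x.
    by rewrite !big_filter [LHS](bigID (fun x => x <= p + q)).
  rewrite leq_mul //.
    by apply: exp_leq_prod => x; rewrite mem_filter => /andP[_ /gt_p /ltnW].
  by apply: exp_leq_prod => x; rewrite mem_filter -ltnNge => /andP[/ltnW].
have := leq_trans prod_ge prod_le; rewrite -size_s -addnS expnD leqNgt.
by rewrite ltn_pmul2l ?expn_gt0 ?p_gt0 // expnS_ltn_expDn //; lia.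
Qed.

Section SmallAndLargeFactors.

Variable d : nat.
Local Notation p := (nth_prime d.+1).
Local Notation F := (first_primes d.+1).

Definition small_factors m := [seq x <- F | x \in primes m].
Definition large_factors m := [seq x <- primes m | p < x].

Lemma perm_small_factors m : perm_eq (small_factors m) [seq x <- primes m | x <= p].
Proof.
apply: uniq_perm; rewrite ?filter_uniq ?first_primes_uniq ?primes_uniq // => x.
rewrite !mem_filter mem_first_primes [RHS]andbC.
by case: (boolP (x \in primes m)) => //; rewrite mem_primes => /andP[->].
Qed.

Lemma size_small_large_factors m :
  size (small_factors m) + size (large_factors m) = size (primes m).
Proof.
rewrite (perm_size (perm_small_factors m)) !size_filter -(count_predC (fun x => x <= p)).
by congr (_ + _); apply: eq_count => x; rewrite /= ltnNge.
Qed.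

Lemma squarefree_small_large_factors m : squarefree m ->
  m = \prod_(x <- small_factors m) x * \prod_(x <- large_factors m) x.
Proof.
move/squarefree_prodE => {1}->; rewrite (perm_big _ (perm_small_factors m)) !big_filter.
rewrite [LHS](bigID (fun x => x <= p)); congr (_ * _).
by apply: eq_bigl => x; rewrite ltnNge.
Qed.

(* [m] and [primorial d.+1] share the small factors, and the remaining
   [size (large_factors m)].+1 factors of the primorial are at most [p]. *)
Lemma prod_large_factors_leq m :
  m <= primorial d.+1 -> squarefree m -> size (primes m) = d ->
  \prod_(x <- large_factors m) x <= p ^ (size (large_factors m)).+1.
Proof.
move=> m_le sqf_m size_m; pose rest := [seq x <- F | x \notin primes m].
have primorial_eq : primorial d.+1 = \prod_(x <- small_factors m) x * \prod_(x <- rest) x.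
  by rewrite primorialE !big_filter [LHS](bigID (mem (primes m))).
have size_rest : size rest = (size (large_factors m)).+1.
  have := size_small_large_factors m; rewrite size_m.
  have : size (small_factors m) + size rest = d.+1.
    by rewrite !size_filter count_predC size_first_primes.
  lia.
rewrite -size_rest; apply: leq_trans (_ : _ <= \prod_(x <- rest) x) _.
  have small_gt0 : 0 < \prod_(x <- small_factors m) x.
    rewrite big_seq prodn_cond_gt0 // => x.
    by rewrite mem_filter mem_first_primes => /andP[_ /andP[/prime_gt0]].
  by rewrite -(leq_pmul2l small_gt0) -primorial_eq -squarefree_small_large_factors.
by apply: prod_leq_exp => x; rewrite mem_filter mem_first_primes => /and3P[].
Qed.

(* [m] is determined by its small factors, a subsequence of [F], and by the
   product of its large factors, which is at most [p ^ q.*2]. *)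
Lemma pi_d_primorial_leq q : p ^ q.+1 < (p + q) ^ q ->
  pi_d d (primorial d.+1) <= 2 ^ d.+1 * (p ^ q.*2).+1.
Proof.
move=> pq_base; rewrite /pi_d -size_filter.
set L := [seq m <- _ | _]; pose code m := (small_factors m, \prod_(x <- large_factors m) x).
have memL m : m \in L -> [/\ m <= primorial d.+1, squarefree m & size (primes m) = d].
  by rewrite mem_filter mem_iota => /andP[/andP[-> /eqP->] /andP[_]]; rewrite add1n ltnS.
have prod_large_leq m : m \in L -> \prod_(x <- large_factors m) x <= p ^ q.*2.
  case/memL => m_le sqf_m size_m.
  apply: leq_trans (prod_large_factors_leq m_le sqf_m size_m) _.
  rewrite leq_pexp2l ?nth_prime_gt0 //; apply: size_ltn_of_prod_leq pq_base _ _ _.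
  - exact: nth_prime_gt0.
  - exact/filter_uniq/primes_uniq.
  - by move=> x; rewrite mem_filter => /andP[].
  exact: prod_large_factors_leq.
pose codes := [seq (a, b) | a <- subseqs F, b <- iota 0 (p ^ q.*2).+1].
have -> : 2 ^ d.+1 * (p ^ q.*2).+1 = size codes.
  by rewrite size_allpairs size_subseqs size_first_primes size_iota.
rewrite -(size_map code) uniq_leq_size //.
  rewrite map_inj_in_uniq ?filter_uniq ?iota_uniq // => m1 m2.
  move=> /memL[_ sqf1 _] /memL[_ sqf2 _] [small_eq large_eq].
  by rewrite (squarefree_small_large_factors sqf1) small_eq large_eq
    -squarefree_small_large_factors.
move=> _ /mapP[m Lm ->]; apply: allpairs_f; first exact/mem_subseqs/filter_subseq.
by rewrite mem_iota ltnS prod_large_leq.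
Qed.

End SmallAndLargeFactors.

Lemma bernoulli_expn p q r : p ^ r * (p + r * q) <= p * (p + q) ^ r.
Proof.
elim: r => [|r IHr]; first by rewrite expn0 mul0n addn0 mul1n muln1.
rewrite !expnS; move: IHr; set a := p ^ r; set b := (p + q) ^ r => IHr.
have step : p * (p + r.+1 * q) <= (p + q) * (p + r * q) by nia.
have := leq_mul (leqnn a) step; have := leq_mul (leqnn (p + q)) IHr; nia.
Qed.

(* With [q = r * t], Bernoulli and [p <= r * q] give [2 * p ^ r <= (p + q) ^ r];
   raising to the [t]-th power, [(p + q) ^ q >= 2 ^ t * p ^ q > p ^ q.+1]. *)
Lemma expnS_ltn_expD p r t :
  0 < p -> p <= r * (r * t) -> p < 2 ^ t -> p ^ (r * t).+1 < (p + r * t) ^ (r * t).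
Proof.
move=> p_gt0 p_le p_lt; set q := r * t.
have double_le : 2 * p ^ r <= (p + q) ^ r.
  rewrite -(leq_pmul2l p_gt0); apply: leq_trans (bernoulli_expn p q r).
  by rewrite -/q in p_le; set a := p ^ r; nia.
have -> : (p + q) ^ q = ((p + q) ^ r) ^ t by rewrite -expnM.
apply: leq_trans (leq_expn2r t double_le); rewrite expnMn -expnM -/q expnS.
by rewrite ltn_pmul2r ?expn_gt0 ?p_gt0.
Qed.

Lemma exp2_geq_sq h : 17 <= h -> 2 ^ 8 * h.+2 ^ 2 <= 2 ^ h.
Proof.
move/subnK <-; elim: (h - 17) => [|k IHk] //.
rewrite addSn [2 ^ (_ + 17).+1]expnS; apply: leq_trans _ (leq_mul (leqnn 2) IHk); nia.
Qed.

(* With [Z := 2 ^ trunc_log 4 d], i.e. [Z * Z <= d < 4 * (Z * Z)], take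
   [q := 8 * Z * t] with [t := 3 * (trunc_log 4 d).+2]: then [p < 2 ^ t] and
   [p <= (8 * Z) ^ 2 * t], while [t * q.*2 = 144 * Z * (trunc_log 4 d).+2 ^ 2 <= d]. *)
Lemma exists_good_exponent d : 4 ^ 17 <= d -> exists q,
  nth_prime d.+1 ^ q.+1 < (nth_prime d.+1 + q) ^ q /\ (nth_prime d.+1 ^ q.*2).+1 <= 2 ^ d.
Proof.
move=> d_ge; have d_gt0 : 0 < d by apply: leq_trans d_ge.
set h := trunc_log 4 d; set Z := 2 ^ h; set p := nth_prime d.+1.
have h_ge : 17 <= h by apply: trunc_log_max.
have ZZ_le : Z * Z <= d by rewrite -expnMn; apply: trunc_logP.
have d_lt : d < 4 * (Z * Z) by rewrite -expnMn -expnS; apply: trunc_log_ltn.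
have h_lt : h.+1 <= Z by apply: ltn_expl.
have p_le : p <= 16 * d * h.+1 by apply: nth_prime_leq_log.
have sq_le : 2 ^ 8 * h.+2 ^ 2 <= Z by apply: exp2_geq_sq.
set t := 3 * h.+2.
have exp_t : 2 ^ t = 64 * (Z * Z * Z).
  by rewrite /Z -!expnD -[64]/(2 ^ 6) -expnD /t; congr (2 ^ _); lia.
have p_lt : p < 2 ^ t by rewrite exp_t; nia.
exists (8 * Z * t); split; first by apply: expnS_ltn_expD; rewrite ?nth_prime_gt0 //; nia.
have q2_gt0 : 0 < (8 * Z * t).*2 by rewrite double_gt0 !muln_gt0 expn_gt0.
apply: leq_trans (_ : (2 ^ t) ^ (8 * Z * t).*2 <= _); first by rewrite ltn_exp2r.
by rewrite -expnM leq_pexp2l //; nia.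
Qed.

Lemma pi_d_primorial_large d : 4 ^ 17 <= d -> pi_d d (primorial d.+1) <= 2 * 4 ^ d.
Proof.
case/exists_good_exponent => q [pq_base exp_le].
apply: leq_trans (pi_d_primorial_leq pq_base) _.
by rewrite expnS -mulnA leq_mul2l -[4]/(2 * 2) expnMn leq_mul2l exp_le !orbT.
Qed.

Theorem lemma3p3 :
  exists C K : nat, 0 < C /\
    forall d : nat, 1 <= d -> pi_d d (primorial d.+1) <= K * C ^ d.
Proof.
pose K := \max_(i < 4 ^ 17) pi_d i (primorial i.+1).
exists 4, (2 + K); split=> // d _; rewrite mulnDl.
have [d_large|d_small] := leqP (4 ^ 17) d.
  by apply: leq_trans (pi_d_primorial_large d_large) (leq_addr _ _).
apply: leq_trans (_ : K <= _).
  exact: (@leq_bigmax _ (fun i : 'I_(4 ^ 17) => pi_d i (primorial i.+1)) (Ordinal d_small)).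
by rewrite (leq_trans _ (leq_addl _ _)) // leq_pmulr ?expn_gt0.
Qed.
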